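(* If $G$ is a graph with minimum degree $\delta(G)\ge 2$ and girth $g(G)\ge 5$, and $H$ is any graph, then $\chi_{\mu_2}(G\circ H)\le \chi_{\mu_2}(G)$. This bound is sharp.
   Context: The lexicographic product $G\circ H$ has vertex set $V(G)\times V(H)$, with $(g,h)$ adjacent to $(g',h')$ iff $gg'\in E(G)$, or $g=g'$ and $hh'\in E(H)$. The girth is the length of a shortest cycle. A set $M\subseteq V(X)$ is a $2$-distance mutual-visibility set if for every two vertices $u,v\in M$ there exists a shortest $u,v$-path of length at most $2$ none of whose internal vertices lies in $M$. $\chi_{\mu_2}(X)$ is the minimum cardinality of a partition of $V(X)$ into $2$-distance mutual-visibility sets. *)

From mathcomp Require Import all_boot.
Set Implicit Arguments. Unset Strict Implicit. Unset Printing Implicit Defensive.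

Definition simple_graph (T : finType) (e : rel T) : Prop :=
  symmetric e /\ irreflexive e.

Definition lex_rel (T U : finType) (e : rel T) (f : rel U) : rel (T * U) :=
  fun p q => e p.1 q.1 || ((p.1 == q.1) && f p.2 q.2).

Definition min_deg_ge (T : finType) (e : rel T) (k : nat) : Prop :=
  forall x : T, k <= #|[set y | e x y]|.

(* Girth g(G) >= k: G has no cycle (sequence of >= 3 distinct vertices, consecutive
   ones adjacent, last adjacent to first) of length < k.  Acyclic graphs have infinite girth. *)
Definition girth_ge (T : finType) (e : rel T) (k : nat) : Prop :=
  forall s : seq T, uniq s -> 3 <= size s -> size s < k -> ~~ cycle e s.

(* M is a 2-distance mutual-visibility set: for all distinct u, v in M there is a
   shortest u,v-path of length <= 2 with no internal vertex in M, i.e. either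
   d(u,v) = 1 (u,v adjacent, no internal vertices), or d(u,v) = 2 (u,v non-adjacent)
   and some common neighbour w (the internal vertex of a shortest path) is not in M.
   (For u = v the trivial path of length 0 works.) *)
Definition mv2 (T : finType) (e : rel T) (M : {set T}) : bool :=
  [forall u in M, forall v in M,
     (u != v) ==>
     (e u v || (~~ e u v && [exists w, [&& e u w, e w v & w \notin M]]))].

(* chi_mu2(G): minimum cardinality of a partition of V(G) into 2-distance
   mutual-visibility sets.  (The partition into singletons always qualifies and has
   #|T| blocks, so #|T| is a valid default for the minimum.) *)
Definition chi_mu2 (T : finType) (e : rel T) : nat :=
  \big[minn/#|T|]_(P : {set {set T}} |
                     partition P [set: T] && [forall M in P, mv2 e M]) #|P|.

(** Lift an optimal partition [P] of [G] to the partition of [G o H] into the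
    sets [M x V(H)], [M \in P].  Two vertices of [M x V(H)] in different
    [G]-fibres see each other through [(w, h)], where [w] is the witness for
    their projections in [G].  Two vertices [(g, h)], [(g, h')] of the same
    fibre are adjacent or see each other through [(x, h)] for a neighbour [x]
    of [g] outside [M]; such an [x] exists because [g] has two neighbours, and
    if both were in [M] they would be adjacent or joined through a vertex
    outside [M], closing a triangle or a 4-cycle.
    Sharpness: [C6 o K1] is [C6], whose even and odd vertices form a valid
    partition, while no single block can contain two vertices at distance 2. *)

From HB Require Import structures.
From mathcomp Require Import all_boot.

Set Implicit Arguments.
Unset Strict Implicit.
Unset Printing Implicit Defensive.

HB.instance Definition _ := SemiGroup.isComLaw.Build nat minn minnA minnC.

Lemma card_preim_partition (T rT : finType) (f : T -> rT) (D : {set T}) :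
  #|preim_partition f D| <= #|f @: D|.
Proof.
have -> : preim_partition f D = (fun b => [set y in D | b == f y]) @: (f @: D).
  by rewrite -imset_comp.
exact: leq_imset_card.
Qed.

Section MutualVisibility.

Variables (T : finType) (e : rel T).

Lemma mv2P (M : {set T}) :
  reflect (forall u v, u \in M -> v \in M -> u != v ->
             e u v \/ exists w, [/\ e u w, e w v & w \notin M])
          (mv2 e M).
Proof.
apply: (iffP forall_inP) => [mvM u v uM vM uv | mvM u uM].
  move/forall_inP/(_ v vM)/implyP/(_ uv): (mvM u uM).
  case/orP=> [-> | /andP[_ /existsP[w /and3P[uw wv wM]]]]; first by left.
  by right; exists w.
apply/forall_inP => v vM; apply/implyP => uv.
case: (mvM u v uM vM uv) => [-> // | [w [uw wv wM]]].
by case: (e u v) => //=; apply/existsP; exists w; rewrite uw wv wM.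
Qed.

Definition mv2_partition (P : {set {set T}}) :=
  partition P [set: T] && [forall M in P, mv2 e M].

Lemma chi_mu2_le P : mv2_partition P -> chi_mu2 e <= #|P|.
Proof. by move=> mvP; rewrite /chi_mu2 (bigD1 P) //= geq_minl. Qed.

Lemma chi_mu2_attained : exists2 P, mv2_partition P & chi_mu2 e = #|P|.
Proof.
(* The singleton partition has at most [#|T|] blocks, so the default [#|T|]
   of the minimum is never below the size of some valid partition. *)
pose P1 := preim_partition id [set: T].
have mvP1 : mv2_partition P1.
  rewrite /mv2_partition preim_partitionP; apply/forall_inP => _ /imsetP[x _ ->].
  by apply/mv2P => u v; rewrite !inE => /eqP<- /eqP<-; rewrite eqxx.
have P1_le : #|P1| <= #|T|.
  by apply: leq_trans (card_preim_partition _ _) _; apply: max_card.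
have [P mvP Pmin] := arg_minnP (fun P : {set {set T}} => #|P|) mvP1.
exists P => //.
apply/eqP; rewrite eqn_leq chi_mu2_le //=.
apply: (big_ind (fun n => #|P| <= n)) => [|m n|]; last exact: Pmin.
  exact: leq_trans (Pmin _ mvP1) P1_le.
by rewrite leq_min => -> ->.
Qed.

Lemma chi_mu2_ge2 u v : u != v -> ~~ e u v -> 1 < chi_mu2 e.
Proof.
move=> uv euv; have [P /andP[partP /forall_inP mvP] ->] := chi_mu2_attained.
have coverP x : x \in cover P by rewrite (cover_partition partP) inE.
have blockP x : pblock P x \in P by rewrite pblock_mem.
have [Bu | Buv] := eqVneq (pblock P u) (pblock P v); last first.
  by apply/card_gt1P; exists (pblock P u), (pblock P v).
have uBu : u \in pblock P u by rewrite mem_pblock.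
have vBu : v \in pblock P u by rewrite Bu mem_pblock.
have [euv' | [w [_ _ wB]]] := mv2P _ (mvP _ (blockP u)) u v uBu vBu uv.
  by rewrite euv' in euv.
apply/card_gt1P; exists (pblock P u), (pblock P w); do !split=> //.
by apply: contraNneq wB => ->; rewrite mem_pblock.
Qed.

End MutualVisibility.

Section DegreeTwoGirthFive.

Variables (T : finType) (e : rel T).
Hypotheses (e_sym : symmetric e) (e_irr : irreflexive e).
Hypotheses (deg2 : min_deg_ge e 2) (girth5 : girth_ge e 5).

Let adj_neq x y : e x y -> x != y.
Proof. by apply: contraTneq => ->; rewrite e_irr. Qed.

Lemma no_triangle a b c : e a b -> e b c -> ~~ e c a.
Proof.
move=> ab bc; apply/negP => ca.
have abc : uniq [:: a; b; c].
  by rewrite /= !inE negb_or (adj_neq ab) (adj_neq bc) (eq_sym a) (adj_neq ca).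
by move: (girth5 abc isT isT); rewrite /= ab bc ca.
Qed.

Lemma no_square a b c d : a != c -> b != d -> e a b -> e b c -> e c d -> ~~ e d a.
Proof.
move=> ac bd ab bc cd; apply/negP => da.
have abcd : uniq [:: a; b; c; d].
  rewrite /= !inE !negb_or ac bd (eq_sym a d).
  by rewrite (adj_neq ab) (adj_neq bc) (adj_neq cd) (adj_neq da).
by move: (girth5 abcd isT isT); rewrite /= ab bc cd da.
Qed.

Lemma mv2_exists_nbr_notin (M : {set T}) g :
  mv2 e M -> g \in M -> exists2 x, e g x & x \notin M.
Proof.
move=> /mv2P mvM gM.
have /card_gt1P[x [y [gx gy xy]]] := deg2 g; rewrite !inE in gx gy.
have [xM | ] := boolP (x \in M); last by exists x.
have [yM | ] := boolP (y \in M); last by exists y.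
case: (mvM x y xM yM xy) => [exy | [w [xw wy wM]]].
  by move: (no_triangle gx exy); rewrite e_sym gy.
have gw : g != w by apply: contraNneq wM => <-.
by move: (no_square gw xy gx xw wy); rewrite e_sym gy.
Qed.

Lemma mv2_lex_preim_fst (U : finType) (f : rel U) (M : {set T}) :
  mv2 e M -> mv2 (lex_rel e f) (fst @^-1: M).
Proof.
move=> mvM; apply/mv2P => -[g h] [g' h']; rewrite !inE /= => gM g'M _.
rewrite /lex_rel /=; have [<- | gg'] := eqVneq g g'.
  case: (f h h'); first by left; rewrite orbT.
  have [x gx xM] := mv2_exists_nbr_notin mvM gM.
  by right; exists (x, h); rewrite /lex_rel /= gx e_sym gx inE.
move/mv2P: mvM => /(_ g g' gM g'M gg') [-> | [w [gw wg' wM]]]; first by left.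
by right; exists (w, h); rewrite /lex_rel /= gw wg' inE.
Qed.

Lemma chi_mu2_lex_le (U : finType) (f : rel U) :
  chi_mu2 (lex_rel e f) <= chi_mu2 e.
Proof.
have [P /andP[partP /forall_inP mvP] ->] := chi_mu2_attained e.
have coverP x : x \in cover P by rewrite (cover_partition partP) inE.
have blockP x : pblock P x \in P by rewrite pblock_mem.
pose Q := preim_partition (pblock P \o fst) [set: T * U].
apply: leq_trans (chi_mu2_le (P := Q) _) _.
  rewrite /mv2_partition preim_partitionP; apply/forall_inP => _ /imsetP[[g h] _ ->].
  have -> : [set y in [set: T * U] | pblock P g == pblock P y.1] =
            fst @^-1: pblock P g.
    by apply/setP => y; rewrite !inE eq_pblock ?(partition_trivIset partP) ?coverP.
  exact/mv2_lex_preim_fst/mvP/blockP.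
apply: leq_trans (card_preim_partition _ _) _.
by apply/subset_leq_card/subsetP => _ /imsetP[y _ ->]; apply: blockP.
Qed.

End DegreeTwoGirthFive.

Definition cycle6 : rel 'I_6 := fun i j => (j == ordS i) || (i == ordS j).

Lemma cycle6_simple : simple_graph cycle6.
Proof.
split; first by move=> i j; rewrite /cycle6 orbC.
by case=> [[|[|[|[|[|[|?]]]]]] ?].
Qed.

Lemma cycle6_min_deg : min_deg_ge cycle6 2.
Proof.
move=> i; apply/card_gt1P; exists (ordS i), (ord_pred i).
rewrite !inE /cycle6 ord_predK !eqxx !orbT; do !split.
by case: i => [[|[|[|[|[|[|?]]]]]] ?].
Qed.

Lemma cycle6_girth : girth_ge cycle6 5.
Proof.
case=> [|a [|b [|c [|d [|? ?]]]]] //= + _ _.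
  by move: a b c; do 2!case=> [[|[|[|[|[|[|?]]]]]] ?] //; case=> [[|[|[|[|[|[|?]]]]]] ?].
by move: a b c d; do 2!case=> [[|[|[|[|[|[|?]]]]]] ?] //; do 2!case=> [[|[|[|[|[|[|?]]]]]] ?].
Qed.

Lemma odd_ordS6 (i : 'I_6) : odd (ordS i) = ~~ odd i.
Proof. by case: i => [[|[|[|[|[|[|?]]]]]] ?]. Qed.

Lemma cycle6_two_apart (u v : 'I_6) :
  odd u = odd v -> u != v -> (v == ordS (ordS u)) || (u == ordS (ordS v)).
Proof. by move: u v; do 2!case=> [[|[|[|[|[|[|?]]]]]] ?]. Qed.

Lemma cycle6_chi_le2 : chi_mu2 cycle6 <= 2.
Proof.
pose P := preim_partition (fun i : 'I_6 => odd i) [set: 'I_6].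
apply: leq_trans (chi_mu2_le (P := P) _) _; last first.
  by apply: leq_trans (card_preim_partition _ _) _; rewrite -card_bool max_card.
rewrite /mv2_partition preim_partitionP; apply/forall_inP => _ /imsetP[x _ ->].
apply/mv2P => u v; rewrite !inE => /eqP xu /eqP xv uv; right.
case/orP: (cycle6_two_apart (etrans (esym xu) xv) uv) => /eqP->.
  exists (ordS u); rewrite /cycle6 !eqxx ?orbT !inE /= odd_ordS6 xu.
  by case: (odd u).
exists (ordS v); rewrite /cycle6 !eqxx ?orbT !inE /= odd_ordS6 xv.
by case: (odd v).
Qed.

Theorem theorem4p2 :
  (forall (T U : finType) (e : rel T) (f : rel U),
      simple_graph e -> simple_graph f ->
      min_deg_ge e 2 -> girth_ge e 5 ->
      chi_mu2 (lex_rel e f) <= chi_mu2 e) /\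
  (* sharpness: the bound is attained *)
  (exists (T U : finType) (e : rel T) (f : rel U),
      [/\ 0 < #|T| /\ 0 < #|U|, simple_graph e /\ simple_graph f, min_deg_ge e 2,
          girth_ge e 5 &
          chi_mu2 (lex_rel e f) = chi_mu2 e]).
Proof.
split=> [T U e f [e_sym e_irr] _ deg2 girth5 | ]; first exact: chi_mu2_lex_le.
have [c6_sym c6_irr] := cycle6_simple.
exists 'I_6, unit, cycle6, (fun _ _ => false); split.
- by rewrite card_ord card_unit.
- by split; [exact: cycle6_simple | split].
- exact: cycle6_min_deg.
- exact: cycle6_girth.
apply/eqP; rewrite eqn_leq (chi_mu2_lex_le c6_sym c6_irr cycle6_min_deg cycle6_girth) /=.
by apply: leq_trans cycle6_chi_le2
  (chi_mu2_ge2 (u := (ord0, tt)) (v := (ordS (ordS ord0), tt)) _ _).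
Qed.
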